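(* Let $(X,d_X)$ and $(\Lambda,d_\Lambda)$ be complete metric spaces and, for each $\lambda\in\Lambda$, let $S_\lambda(\cdot,\cdot)$ be a process on $X$. Assume that for every $s\in\mathbb R$ and $t\ge s$ the map $\lambda\mapsto S_\lambda(t,s)x$ is continuous, uniformly for $x$ in compact subsets of $X$. Let $K\subseteq X$ be compact. Then for any $s\in\mathbb R$ and $t\ge s$ the map $(\lambda,B)\mapsto S_\lambda(t,s)B$ is jointly continuous on $\Lambda\times CB(K)$, where the images are equipped with the Hausdorff distance $\Delta_X$.
   Context: A process on $X$ is a family of maps $S(t,s):X\to X$, $s\in\mathbb R$, $t\ge s$, with $S(t,t)=\mathrm{id}$, $S(t,\tau)S(\tau,s)=S(t,s)$ for $t\ge\tau\ge s$, and $S(t,s)x$ continuous in $(x,t,s)$. $\rho_X(A,C)=\sup_{a\in A}\inf_{c\in C}d_X(a,c)$, $\Delta_X(A,C)=\max(\rho_X(A,C),\rho_X(C,A))$. $CB(K)$ is the set of nonempty closed (hence compact) subsets of $K$ with metric $\Delta_X$. *)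

From HB Require Import structures.
From mathcomp Require Import all_boot all_order all_algebra.
From mathcomp Require Import all_classical all_reals all_analysis.
Set Implicit Arguments. Unset Strict Implicit. Unset Printing Implicit Defensive.
Import Order.TTheory GRing.Theory Num.Theory.
Import numFieldTopology.Exports numFieldNormedType.Exports.
Local Open Scope classical_set_scope.
Local Open Scope ring_scope.

Definition complete_metric {R : realType} (T : metricType R) : Prop :=
  forall F : set_system T, ProperFilter F -> cauchy F -> exists x : T, F --> x.

(* A process on X: S t s x stands for S(t,s)x (only t >= s is meaningful). *)
Definition is_process {R : realType} {X : metricType R}
  (S : R -> R -> X -> X) : Prop :=
  [/\ (forall t x, S t t x = x),
      (forall t tau s x, s <= tau -> tau <= t -> S t tau (S tau s x) = S t s x) &
      {within [set p : X * R * R | p.2 <= p.1.2],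
         continuous (fun p : X * R * R => S p.1.2 p.2 p.1.1)}].

Definition hrho {R : realType} {X : metricType R} (A C : set X) : R :=
  sup [set inf [set mdist a c | c in C] | a in A].

Definition hdist {R : realType} {X : metricType R} (A C : set X) : R :=
  Num.max (hrho A C) (hrho C A).

Definition CB {R : realType} {X : metricType R} (K : set X) : set (set X) :=
  [set B | [/\ B `<=` K, B !=set0 & closed B]].

From HB Require Import structures.
From mathcomp Require Import all_boot all_order all_algebra.
From mathcomp Require Import all_classical all_reals all_analysis.
From mathcomp Require Import lra.
Import Order.TTheory GRing.Theory Num.Theory.
Import numFieldTopology.Exports numFieldNormedType.Exports.
Local Open Scope classical_set_scope.
Local Open Scope ring_scope.

(* On the compact set K the map S_lam0(t,s) is uniformly
   continuous, and S_lam(t,s) is uniformly close to S_lam0(t,s) for lam near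
   lam0.  Hence if B is Hausdorff-close to B0, every point S_lam0(t,s)b0 has a
   point S_lam(t,s)b nearby (take b close to b0) and conversely, which bounds
   both one-sided distances between the images by eps/3 + eps/3. *)

Section MetricCompact.
Context {R : realType} {X Y : metricType R}.

Lemma compact_mdist_bounded {K : set X} :
  compact K -> exists M : R, forall a c, K a -> K c -> mdist a c <= M.
Proof.
move=> cK; have [[c0 Kc0]|K0] := pselect (K !=set0); last first.
  by exists 0 => a c Ka; case: K0; exists a.
have nc := (near_covering_withinP K).2 ((compact_near_coveringP K).1 cK).
have [|M [_ HM]] := nc R (pinfty_nbhs R) (fun M x => mdist c0 x <= M).
  move=> x Kx; near=> x' M => /= Kx'.
  have x'x : mdist x x' < 1.
    near: x'; apply/metricType_numDomainType.nbhs_mdistP; exists 1 => //=.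
  have xM : mdist c0 x + 1 <= M.
    near: M; apply: nbhs_pinfty_ge; exact: num_real.
  by rewrite (le_trans (metric_triangle c0 x x'))// (le_trans _ xM)// lerD2l ltW.
have HM1 x : K x -> mdist c0 x <= M + 1 by apply: HM; rewrite ?ltrDl.
exists ((M + 1) + (M + 1)) => a c Ka Kc.
by rewrite (le_trans (metric_triangle a c0 c))// lerD ?HM1// metric_sym HM1.
Unshelve. all: by end_near.
Qed.

Lemma compact_unif_continuous {f : X -> Y} {K : set X} :
  compact K ->
  (forall x (e : R), 0 < e -> exists2 r : R, 0 < r &
     forall y, mdist x y < r -> mdist (f x) (f y) < e) ->
  forall e : R, 0 < e -> exists2 d : R, 0 < d &
    forall x y, K x -> K y -> mdist x y < d -> mdist (f x) (f y) < e.
Proof.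
move=> cK fc e e0.
have nc := (near_covering_withinP K).2 ((compact_near_coveringP K).1 cK).
have [|r /= r0 Hr] := nc R (0:R)^'+
  (fun d x => forall y, K y -> mdist x y < d -> mdist (f x) (f y) < e).
  move=> x Kx.
  have [r r0 Hr] := fc x _ (divr_gt0 e0 (ltr0n _ 2)).
  have r20 : 0 < r / 2 by rewrite divr_gt0.
  near=> x' d => Kx' y Ky x'y.
  have xx' : mdist x x' < r / 2.
    near: x'; apply/metricType_numDomainType.nbhs_mdistP; exists (r / 2) => //.
  have dr : d < r / 2.
    near: d; exact: nbhs_right_lt.
  have xy : mdist x y < r.
    rewrite (le_lt_trans (metric_triangle x x' y))//.
    by rewrite [r]splitr ltrD// (lt_trans x'y).
  rewrite (le_lt_trans (metric_triangle _ (f x) _))// [e]splitr ltrD//.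
    rewrite metric_sym; apply: Hr.
    by rewrite (lt_trans xx')// ltr_pdivrMr// ltr_pMr// ltr1n.
  exact: Hr.
have r20 : 0 < r / 2 by rewrite divr_gt0.
exists (r / 2) => // x y Kx Ky; apply: (Hr (r / 2)) => //.
by rewrite /ball_ /= sub0r normrN gtr0_norm// ltr_pdivrMr// ltr_pMr// ltr1n.
Unshelve. all: by end_near.
Qed.

End MetricCompact.

Section Hausdorff.
Context {R : realType} {X : metricType R}.
Implicit Types (A C : set X) (M d : R).

Lemma inf_mdist_le (a : X) {c : X} {C : set X} :
  C c -> inf [set mdist a c' | c' in C] <= mdist a c.
Proof.
move=> Cc; apply: ge_inf; last by exists c.
by exists 0 => _ [c' _ <-]; exact: mdist_ge0.
Qed.

Lemma hrho_le A C M :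
  A !=set0 -> (forall a, A a -> exists2 c, C c & mdist a c <= M) ->
  hrho A C <= M.
Proof.
move=> [a0 Aa0] near_C; apply: ge_sup.
  by exists (inf [set mdist a0 c | c in C]); exists a0.
move=> _ [a Aa <-]; have [c Cc ac] := near_C a Aa.
exact: le_trans (inf_mdist_le a Cc) ac.
Qed.

(* The boundedness hypothesis makes the supremum in [hrho] a genuine one. *)
Lemma hrho_lt_ex {A C M d} :
  C !=set0 -> (forall a c, A a -> C c -> mdist a c <= M) -> hrho A C < d ->
  forall a, A a -> exists2 c, C c & mdist a c < d.
Proof.
move=> [c0 Cc0] AC_bnd Ad a Aa.
have inf_le : inf [set mdist a c | c in C] <= hrho A C.
  apply: ub_le_sup; last by exists a.
  exists M => _ [a' Aa' <-].
  exact: le_trans (inf_mdist_le a' Cc0) (AC_bnd _ _ Aa' Cc0).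
have [_ [c Cc <-] ac] := @inf_lt _ [set mdist a c | c in C] d
  (ex_intro _ _ (ex_intro2 _ _ c0 Cc0 erefl)) (le_lt_trans inf_le Ad).
by exists c.
Qed.

End Hausdorff.

Section HausdorffImage.
Context {R : realType} {X Y : metricType R}.

Lemma hrho_image_le (f g : X -> Y) (K A C : set X) (d e : R) :
  compact K -> A `<=` K -> C `<=` K -> A !=set0 -> C !=set0 ->
  (forall a c, K a -> K c -> mdist a c < d -> mdist (f a) (g c) <= e) ->
  hrho A C < d -> hrho (f @` A) (g @` C) <= e.
Proof.
move=> cK AK CK [a0 Aa0] C0 fg AC.
have [M KM] := compact_mdist_bounded cK.
apply: hrho_le; first by exists (f a0), a0.
move=> _ [a Aa <-].
have [c Cc ac] := hrho_lt_ex C0 (fun a c Aa Cc => KM a c (AK a Aa) (CK c Cc)) AC a Aa.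
by exists (g c); [exists c | exact: fg (AK _ Aa) (CK _ Cc) ac].
Qed.

End HausdorffImage.

Lemma process_continuous_at {R : realType} {X : metricType R}
  {S : R -> R -> X -> X} {s t : R} : is_process S -> s <= t ->
  forall x (e : R), 0 < e -> exists2 r : R, 0 < r &
    forall y, mdist x y < r -> mdist (S t s x) (S t s y) < e.
Proof.
case=> _ _ /subspace_continuousP Scont st x e e0.
have := Scont (x, t, s) st.
move=> /metricType_numDomainType.cvgrPdist_lt /(_ e e0) Snear.
have slice : (fun y : X => (y, t, s)) @ x --> (x, t, s).
  exact: (cvg_pair (cvg_pair cvg_id (cvg_cst t)) (cvg_cst s)).
have /metricType_numDomainType.nbhs_mdistP [r /= r0 Hr] := slice _ Snear.
by exists r => // y xy; exact: (Hr y xy st).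
Qed.

Theorem lemma3p2 (R : realType) (X Lam : metricType R)
  (S : Lam -> R -> R -> X -> X) :
  complete_metric X -> complete_metric Lam ->
  (forall lam, is_process (S lam)) ->
  (forall (s t : R), s <= t -> forall C : set X, compact C ->
     forall lam0 : Lam, forall eps : R, 0 < eps ->
       exists2 delta : R, 0 < delta &
         forall lam : Lam, mdist lam0 lam < delta ->
           forall x, C x -> mdist (S lam0 t s x) (S lam t s x) < eps) ->
  forall K : set X, compact K ->
  forall (s t : R), s <= t ->
  forall (lam0 : Lam) (B0 : set X), CB K B0 ->
  forall eps : R, 0 < eps ->
    exists2 delta : R, 0 < delta &
      forall (lam : Lam) (B : set X), CB K B ->
        mdist lam0 lam < delta -> hdist B0 B < delta ->
        hdist (S lam0 t s @` B0) (S lam t s @` B) < eps.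
Proof.
move=> _ _ Sproc Slam K cK s t st lam0 B0 [B0K B00 _] eps eps0.
have e30 : 0 < eps / 3 by rewrite divr_gt0.
have [d1 d10 S0unif] := compact_unif_continuous cK
  (process_continuous_at (Sproc lam0) st) _ e30.
have [d2 d20 Sclose] := Slam s t st K cK lam0 _ e30.
exists (Num.min d1 d2) => [|lam B [BK B0' _]]; first by rewrite lt_min d10 d20.
rewrite /hdist lt_min gt_max !lt_min => /andP[_ lam_d2] /andP[].
move=> /andP[B0B _] /andP[BB0 _].
have close a c : K a -> K c -> mdist a c < d1 ->
    mdist (S lam0 t s a) (S lam t s c) <= eps / 3 + eps / 3.
  move=> Ka Kc ac; rewrite (le_trans (metric_triangle _ (S lam0 t s c) _))//.
  by rewrite ltW// ltrD// ?S0unif// Sclose.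
have third : eps / 3 + eps / 3 < eps by lra.
rewrite gt_max; apply/andP; split; apply: le_lt_trans third.
- exact: hrho_image_le cK B0K BK B00 B0' close B0B.
- apply: hrho_image_le cK BK B0K B0' B00 _ BB0 => a c Ka Kc ac.
  by rewrite metric_sym close// metric_sym.
Qed.
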